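(* A regular Hausdorff space $X$ has a point-regular base if and only if $\mathcal{F}(X)$ has a point-regular base.
   Context: $\mathcal{F}(X)$ is the set of nonempty finite subsets of $X$ with the Vietoris topology (base: $\langle U_1,\dots,U_k\rangle=\{A: A\subset\bigcup_i U_i,\ A\cap U_j\neq\emptyset\ \forall j\}$, $U_i$ open in $X$). A base $\mathcal{B}$ of a space $Y$ is point-regular if for every $x\in Y$ and every neighborhood $U$ of $x$, only finitely many members of $\mathcal{B}$ contain $x$ and meet $Y\setminus U$. *)

From HB Require Import structures.
From mathcomp Require Import all_boot all_order all_algebra.
From mathcomp Require Import all_classical all_reals all_analysis.
Set Implicit Arguments. Unset Strict Implicit. Unset Printing Implicit Defensive.
Local Open Scope classical_set_scope.

Definition is_nbhs_of {Y : Type} (opn : set (set Y)) (y : Y) (U : set Y) : Prop :=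
  exists O, opn O /\ O y /\ O `<=` U.

Definition is_base {Y : Type} (opn : set (set Y)) (B : set (set Y)) : Prop :=
  B `<=` opn /\
  (forall (O : set Y) (y : Y), opn O -> O y -> exists b, B b /\ b y /\ b `<=` O).

Definition point_regular_base {Y : Type} (opn : set (set Y)) (B : set (set Y)) : Prop :=
  is_base opn B /\
  (forall (y : Y) (U : set Y), is_nbhs_of opn y U ->
     finite_set [set b | B b /\ b y /\ b `&` ~` U !=set0]).

Definition has_point_regular_base {Y : Type} (opn : set (set Y)) : Prop :=
  exists B, point_regular_base opn B.

Definition finsub (X : Type) := {A : set X | finite_set A /\ A !=set0}.

Definition vietoris_basic {X : Type} (k : nat) (Us : 'I_k -> set X) : set (finsub X) :=
  [set A | (forall x, proj1_sig A x -> exists i, Us i x) /\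
           (forall i, proj1_sig A `&` Us i !=set0)].

Definition vietoris_open (X : topologicalType) : set (set (finsub X)) :=
  [set W | forall A, W A -> exists (k : nat) (Us : 'I_k -> set X),
      (0 < k)%N /\ (forall i, open (Us i)) /\ vietoris_basic Us A /\
      vietoris_basic Us `<=` W].

From HB Require Import structures.
From mathcomp Require Import all_boot all_order all_algebra finmap.
From mathcomp Require Import all_classical all_reals all_analysis.
Set Implicit Arguments. Unset Strict Implicit. Unset Printing Implicit Defensive.
Local Open Scope classical_set_scope.

(* Let B be a point-regular base of a T1 space. A member b of B containing x
   lies in only finitely many larger members of B (they contain x and leave
   the neighbourhood b of x), so its depth, the number of members of B
   properly containing it, is finite and drops along proper inclusions. As
   points are closed, every point lies in a singleton member of B or in
   members of arbitrarily large depth, so for each n the maximal members G_n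
   among those of depth at least n (or singletons) form a point-finite cover.
   The Vietoris sets <S> = {A : A meets each member of S and lies in their
   union}, S a finite nonempty subset of some G_n, form a point-regular base
   of F(X). If A is in <U_1, ..., U_k>, the members of B containing some
   a in A without lying in the intersection of the U_i containing a form a
   finite, upward closed family without singletons, so none of them is deeper
   than its size; hence for large n every <S> with S in G_n containing A lies
   in <U_1, ..., U_k>, and for the finitely many other n the point-finiteness
   of G_n leaves finitely many S. Conversely, the traces {x : {x} in W} of a
   point-regular base of F(X) form a point-regular base of X. *)

Lemma open_is_nbhs_of (Y : Type) (opn : set (set Y)) (O : set Y) y :
  opn O -> O y -> is_nbhs_of opn y O.
Proof. by move=> oO Oy; exists O; split; [|split]. Qed.

Lemma finite_subsets (T : choiceType) (A : set T) :
  finite_set A -> finite_set [set S | S `<=` A].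
Proof.
move=> /finite_fsetP [s ->].
apply: (@sub_finite_set _ _ ((fun t : {fset T} => [set` t]) @` [set` fpowerset s])).
  move=> S Ss; have fS : finite_set S by exact: sub_finite_set Ss (finite_fset s).
  exists (fset_set S); last exact: fset_setK.
  by rewrite /= fpowersetE -(set_fsetK s) -fset_set_sub //; exact: finite_fset.
exact/finite_image/finite_fset.
Qed.

Lemma not_is_subset1_neq (T : Type) (A : set T) x :
  A x -> ~ is_subset1 A -> exists2 z, A z & z <> x.
Proof.
move=> Ax nA1; apply: contrapT => nz; apply: nA1 => y y' Ay Ay'.
have Nz z : A z -> z = x by move=> Az; apply: contrapT => zx; apply: nz; exists z.
by rewrite (Nz y Ay) (Nz y' Ay').
Qed.

Section DeepMembers.
Variables (X : topologicalType) (B : set (set X)).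
Hypothesis X_T1 : forall x : X, closed [set x].
Hypothesis B_preg : point_regular_base open B.

Lemma point_regular_open b : B b -> open b.
Proof. exact: (proj1 (proj1 B_preg)). Qed.

Lemma point_regular_nbhs_finite x U : is_nbhs_of open x U ->
  finite_set [set b | B b /\ b x /\ b `&` ~` U !=set0].
Proof. exact: (proj2 B_preg). Qed.

Definition supsets (b : set X) := [set c | B c /\ b `<` c].

Lemma finite_supsets b : B b -> b !=set0 -> finite_set (supsets b).
Proof.
move=> Bb [x bx]; apply: sub_finite_set (point_regular_nbhs_finite (x := x) (U := b) _).
  by move=> c [Bc [bc cb]]; split=> //; split; [exact: bc | exact: nonsubset].
exact: open_is_nbhs_of (point_regular_open Bb) bx.
Qed.

(* Junk value 0 when [supsets b] is infinite, which [finite_supsets] excludes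
   for nonempty b. *)
Definition depth b := #|` fset_set (supsets b)|.

Lemma depth_lt b c : B b -> b !=set0 -> B c -> b `<` c -> (depth c < depth b)%N.
Proof.
move=> Bb b0 Bc [bc cb]; have c0 := subset_nonempty bc b0.
have fb := finite_supsets Bb b0; have fc := finite_supsets Bc c0.
apply: fproper_ltn_card; rewrite fproperE; apply/andP; split.
  rewrite -fset_set_sub // => d [Bd [cd dc]].
  by split=> //; split=> [z /bc /cd //|db]; apply: dc => z /db /bc.
apply/negP; rewrite -fset_set_sub //.
by move=> /(_ c (conj Bc (conj bc cb))) [_ []].
Qed.

Lemma depth_le F b : finite_set F -> supsets b `<=` F ->
  (depth b <= #|` fset_set F|)%N.
Proof.
move=> fF bF; apply: fsubset_leq_card.
by rewrite -fset_set_sub //; exact: sub_finite_set bF fF.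
Qed.

Definition deep n := [set b | B b /\ ((n <= depth b)%N \/ is_subset1 b)].

Lemma deep_cover n x : exists2 b, deep n b & b x.
Proof.
elim: n => [|n [b [Bb [bn|b1]] bx]].
- have [b [Bb [bx _]]] := proj2 (proj1 B_preg) _ x (@openT X) I.
  by exists b => //; split=> //; left.
- have [b1|nb1] := pselect (is_subset1 b); first by exists b => //; split=> //; right.
  have [z bz zx] := not_is_subset1_neq bx nb1.
  have bzo : open (b `&` ~` [set z]).
    by apply: openI; [exact: point_regular_open | exact: closed_openC].
  have [c [Bc [cx cb]]] := proj2 (proj1 B_preg) _ x bzo (conj bx (nesym zx)).
  have c_b : c `<` b.
    by split=> [w /cb [] //|bc]; have /cb[_] := bc z bz; apply.
  exists c => //; split=> //; left.
  exact: leq_ltn_trans bn (depth_lt Bc (ex_intro _ x cx) Bb c_b).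
- by exists b => //; split=> //; right.
Qed.

Definition maximal_deep n :=
  [set g | deep n g /\ forall c, deep n c -> g `<=` c -> c = g].

Lemma deep_sub_maximal n b : deep n b -> b !=set0 ->
  exists2 g, maximal_deep n g & b `<=` g.
Proof.
have [k] := ubnP (depth b); elim: k b => // k IH b bk bn b0.
have [bmax|] := pselect (forall c, deep n c -> b `<=` c -> c = b); first by exists b.
move=> /existsNP [c /not_implyP [cn /not_implyP [bc cb]]].
have b_c : b `<` c by split=> // cb'; apply: cb; apply/seteqP; split.
have [g gn cg] := IH c (leq_trans (depth_lt (proj1 bn) b0 (proj1 cn) b_c) bk) cn
  (subset_nonempty bc b0).
by exists g => // z /bc /cg.
Qed.

Lemma maximal_deep_cover n x : exists2 g, maximal_deep n g & g x.
Proof.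
have [b bn bx] := deep_cover n x.
by have [g gn bg] := deep_sub_maximal bn (ex_intro _ x bx); exists g => //; exact: bg.
Qed.

Lemma maximal_deep_point_finite n x : finite_set [set g | maximal_deep n g /\ g x].
Proof.
have [g gn gx] := maximal_deep_cover n x.
apply: (@sub_finite_set _ _ ([set g] `|` [set c | B c /\ c x /\ c `&` ~` g !=set0])).
  move=> h [hn hx]; have [->|hg] := pselect (h = g); first by left.
  right; split; first exact: proj1 (proj1 hn).
  by split=> //; apply: nonsubset => /(proj2 hn g (proj1 gn)) /esym.
rewrite finite_setU; split; first exact: finite_set1.
apply: point_regular_nbhs_finite; apply: open_is_nbhs_of gx.
exact: point_regular_open (proj1 (proj1 gn)).
Qed.

Lemma deep_notin_finite_upclosed F n b : finite_set F ->
  (forall c d, F c -> B d -> c `<` d -> F d) -> (forall c, F c -> ~ is_subset1 c) ->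
  (#|` fset_set F| < n)%N -> deep n b -> ~ F b.
Proof.
move=> fF Fup F1 Fn [Bb [bn|b1]] Fb; last exact: F1 Fb b1.
have bF : supsets b `<=` F by move=> c [Bc bc]; exact: Fup Fb Bc bc.
by move: Fn; rewrite ltnNge (leq_trans bn (depth_le fF bF)).
Qed.

Lemma deep_eventually_small (A : set X) (O : X -> set X) :
  finite_set A -> (forall a, A a -> is_nbhs_of open a (O a)) ->
  exists N, forall n g a, (N <= n)%N -> deep n g -> A a -> g a -> g `<=` O a.
Proof.
move=> fA AO; pose F := [set b | B b /\ exists2 a, A a & b a /\ ~ b `<=` O a].
have fF : finite_set F.
  apply: (@sub_finite_set _ _
    (\bigcup_(a in A) [set b | B b /\ b a /\ b `&` ~` O a !=set0])).
    move=> b [Bb [a Aa [ba bO]]]; exists a => //.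
    by split=> //; split=> //; exact: nonsubset.
  by apply: bigcup_finite => // a Aa; exact: point_regular_nbhs_finite (AO a Aa).
exists (#|` fset_set F|).+1 => n g a Nn gn Aa ga; apply: contrapT => gO.
have Fg : F g by split; [exact: proj1 gn | exists a].
apply: (deep_notin_finite_upclosed fF) Nn gn Fg.
- move=> b c [Bb [a' Aa' [ba' bO]]] Bc [bc _]; split=> //; exists a' => //.
  by split; [exact: bc | move=> cO; apply: bO => z /bc /cO].
- move=> b [_ [a' Aa' [ba' bO]]] b1; apply: bO => z bz; rewrite (b1 z a' bz ba').
  by have [V [_ [Va' VO]]] := AO a' Aa'; exact: VO.
Qed.

End DeepMembers.

Section VietorisSets.
Variable X : topologicalType.

Definition vietoris_of (S : set (set X)) : set (finsub X) :=
  [set A | proj1_sig A `<=` \bigcup_(g in S) g /\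
           forall g, S g -> proj1_sig A `&` g !=set0].

Lemma vietoris_basic_nth (s : seq (set X)) :
  vietoris_basic (fun i : 'I_(size s) => nth set0 s i) = vietoris_of [set` s].
Proof.
have memP g : g \in s <-> exists i : 'I_(size s), nth set0 s i = g.
  split; first by move=> /(nthP set0) [i hi <-]; exists (Ordinal hi).
  by move=> [i <-]; exact: mem_nth.
apply/seteqP; split=> A [Acov Ameet]; split.
- by move=> x /Acov [i ix]; exists (nth set0 s i) => //; apply/memP; exists i.
- by move=> g /memP [i <-]; exact: Ameet.
- by move=> x /Acov [g /memP [i <-] gx]; exists i.
- by move=> i; apply: Ameet; apply/memP; exists i.
Qed.

Lemma vietoris_open_of S : finite_set S -> S !=set0 -> S `<=` open ->
  vietoris_open (vietoris_of S).
Proof.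
move=> /finite_fsetP [s ->] [g0 g0s] so A SA.
exists (size s), (fun i : 'I_(size s) => nth set0 s i); rewrite vietoris_basic_nth.
split; first by have : g0 \in (s : seq _) by []; case: (s : seq _).
by split=> [i|]; [apply: so; exact: mem_nth | split].
Qed.

Definition common_nbhd k (Us : 'I_k -> set X) (a : X) :=
  [set z | forall i, Us i a -> Us i z].

Lemma common_nbhd_is_nbhs k (Us : 'I_k -> set X) a :
  (forall i, open (Us i)) -> is_nbhs_of open a (common_nbhd Us a).
Proof.
move=> oU; have : nbhs a (common_nbhd Us a).
  apply: (@filter_forall X 'I_k (fun i => [set z | Us i a -> Us i z])) => i.
  have [Uia|nUia] := pselect (Us i a).
    by apply: filterS (open_nbhs_nbhs (conj (oU i) Uia)) => z Uiz _.
  by apply: filterS (@filterT _ _ _) => z _ /nUia.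
by rewrite nbhsE => -[V [oV Va] VU]; exists V.
Qed.

Lemma vietoris_of_sub_basic k (Us : 'I_k -> set X) S (A : finsub X) :
  vietoris_basic Us A -> vietoris_of S A ->
  (forall g a, S g -> proj1_sig A a -> g a -> g `<=` common_nbhd Us a) ->
  vietoris_of S `<=` vietoris_basic Us.
Proof.
move=> [Acov Ameet] [AS SA] Ssmall C [Ccov Cmeet]; split.
- move=> c /Ccov [g Sg gc]; have [a [Aa ga]] := SA g Sg.
  by have [i ia] := Acov a Aa; exists i; exact: Ssmall Sg Aa ga c gc i ia.
- move=> i; have [a [Aa ia]] := Ameet i; have [g Sg ga] := AS a Aa.
  have [c [Cc gc]] := Cmeet g Sg.
  by exists c; split=> //; exact: Ssmall Sg Aa ga c gc i ia.
Qed.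

End VietorisSets.

Arguments vietoris_of {X} S A.

Section PointRegularVietoris.
Variables (X : topologicalType) (B : set (set X)).
Hypothesis X_T1 : forall x : X, closed [set x].
Hypothesis B_preg : point_regular_base open B.

Definition vietoris_base : set (set (finsub X)) :=
  vietoris_of @` [set S | finite_set S /\ S !=set0 /\ exists n, S `<=` maximal_deep B n].

Lemma vietoris_of_deep_sub_basic k (Us : 'I_k -> set X) (A : finsub X) :
  (forall i, open (Us i)) -> vietoris_basic Us A ->
  exists N, forall n S, (N <= n)%N -> S `<=` deep B n -> vietoris_of S A ->
    vietoris_of S `<=` vietoris_basic Us.
Proof.
move=> oU AU; have [N small] := deep_eventually_small B_preg (proj1 (proj2_sig A))
  (fun a _ => common_nbhd_is_nbhs a oU).
exists N => n S Nn Sn SA; apply: vietoris_of_sub_basic AU SA _ => g a Sg Aa ga.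
exact: small Nn (Sn g Sg) Aa ga.
Qed.

Lemma vietoris_base_is_base : is_base (@vietoris_open X) vietoris_base.
Proof.
split.
  move=> _ [S [fS [S0 [n Sn]]] <-]; apply: vietoris_open_of => // g /Sn [[Bg _] _].
  exact: (point_regular_open B_preg Bg).
move=> W A oW WA; have [k [Us [_ [oU [AU UW]]]]] := oW A WA.
have [N small] := vietoris_of_deep_sub_basic oU AU.
have [fA [a0 Aa0]] := proj2_sig A.
pose S := [set g | maximal_deep B N g /\ proj1_sig A `&` g !=set0].
have SA : vietoris_of S A.
  split=> [x Ax|g [_ //]].
  have [g gN gx] := maximal_deep_cover X_T1 B_preg N x.
  by exists g => //; split=> //; exists x.
exists (vietoris_of S); split; last split=> //.
  exists S => //; split; last split.
  - apply: (@sub_finite_set _ _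
      (\bigcup_(a in proj1_sig A) [set g | maximal_deep B N g /\ g a])).
      by move=> g [gN [a [Aa ga]]]; exists a.
    by apply: bigcup_finite => // a _; exact: maximal_deep_point_finite.
  - have [g gN ga0] := maximal_deep_cover X_T1 B_preg N a0.
    by exists g; split=> //; exists a0.
  - by exists N => g [].
by move=> C /(small N S (leqnn N) (fun g Sg => proj1 (proj1 Sg)) SA) /UW.
Qed.

Lemma vietoris_base_nbhs_finite A U : is_nbhs_of (@vietoris_open X) A U ->
  finite_set [set W | vietoris_base W /\ W A /\ W `&` ~` U !=set0].
Proof.
move=> [W [oW [WA WU]]]; have [k [Us [_ [oU [AU UW]]]]] := oW A WA.
have [N small] := vietoris_of_deep_sub_basic oU AU.
pose T := \bigcup_(m in `I_N)
  \bigcup_(a in proj1_sig A) [set g | maximal_deep B m g /\ g a].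
have fT : finite_set T.
  apply: bigcup_finite => // m _; apply: bigcup_finite => [|a _].
    exact: proj1 (proj2_sig A).
  exact: maximal_deep_point_finite.
apply: sub_finite_set (finite_image vietoris_of (finite_subsets fT)).
move=> _ [[S [_ [_ [n Sn]]] <-] [SA [C [SC nUC]]]].
have nN : (n < N)%N.
  rewrite ltnNge; apply/negP => Nn; apply: nUC; apply: WU; apply: UW.
  exact: small Nn (fun g Sg => proj1 (Sn g Sg)) SA C SC.
exists S => // g Sg; exists n => //; have [a [Aa ga]] := proj2 SA g Sg.
by exists a => //; split=> //; exact: Sn.
Qed.

Lemma point_regular_vietoris_base : point_regular_base (@vietoris_open X) vietoris_base.
Proof. by split; [exact: vietoris_base_is_base | exact: vietoris_base_nbhs_finite]. Qed.

End PointRegularVietoris.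

Section SingletonTrace.
Variable X : topologicalType.

Definition finsub1 (x : X) : finsub X :=
  exist _ [set x] (conj (finite_set1 x) (ex_intro _ x erefl)).

Definition singleton_trace (W : set (finsub X)) : set X := [set x | W (finsub1 x)].

Definition finsubs_within (O : set X) : set (finsub X) := [set A | proj1_sig A `<=` O].

Lemma open_singleton_trace W : vietoris_open W -> open (singleton_trace W).
Proof.
move=> oW; rewrite openE => x Wx.
have [k [Us [k0 [oU [[_ Us_x] UW]]]]] := oW (finsub1 x) Wx.
have : nbhs x [set z | forall i, Us i z].
  apply: (@filter_forall X 'I_k Us) => i; apply: open_nbhs_nbhs; split=> //.
  by have [y [/= -> ?]] := Us_x i.
apply: filterS => z Usz; apply: UW; split; last by move=> i; exists z.
by move=> y /= ->; exists (Ordinal k0).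
Qed.

Lemma vietoris_open_finsubs_within O : open O -> vietoris_open (finsubs_within O).
Proof.
move=> oO A AO; exists 1%N, (fun _ => O); split=> //; split=> //; split.
  split=> [y Ay|_]; first by exists ord0; exact: AO.
  by have [a Aa] := proj2 (proj2_sig A); exists a; split=> //; exact: AO.
by move=> C [Ccov _] y /Ccov [].
Qed.

Lemma point_regular_singleton_trace BF : point_regular_base (@vietoris_open X) BF ->
  point_regular_base open (singleton_trace @` BF).
Proof.
move=> [[BFo BFbase] BFpreg]; split; first split.
- by move=> _ [W BFW <-]; exact/open_singleton_trace/BFo.
- move=> O x oO Ox.
  have xO : finsubs_within O (finsub1 x) by move=> y /= ->.
  have [W [BFW [Wx WO]]] := BFbase _ _ (vietoris_open_finsubs_within oO) xO.
  by exists (singleton_trace W); split; [exists W | split=> // z /WO; apply].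
- move=> y U [V [oV [Vy VU]]].
  have Vnbhs : is_nbhs_of (@vietoris_open X) (finsub1 y) (finsubs_within V).
    apply: open_is_nbhs_of (vietoris_open_finsubs_within oV) _.
    by move=> z /= ->.
  apply: sub_finite_set (finite_image singleton_trace (BFpreg _ _ Vnbhs)).
  move=> _ [[W BFW <-] [Wy [z [Wz nUz]]]]; exists W => //; split=> //; split=> //.
  by exists (finsub1 z); split=> // zV; apply: nUz; apply: VU; exact: zV z erefl.
Qed.

End SingletonTrace.

Arguments singleton_trace {X} W x.

Theorem theorem4p7 (X : topologicalType) :
  hausdorff_space X -> @regular_space X ->
  (has_point_regular_base (@open X) <-> has_point_regular_base (@vietoris_open X)).
Proof.
move=> X_T2 _; have X_T1 : forall x : X, closed [set x].
  by move=> x; apply: accessible_closed_set1; exact: hausdorff_accessible.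
split=> [[B B_preg]|[BF BF_preg]].
  by exists (vietoris_base B); exact: point_regular_vietoris_base.
by exists (singleton_trace @` BF); exact: point_regular_singleton_trace.
Qed.
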